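(* $T(2,\omega^2)=4$.
   Context: $[c]=\{1,\dots,c\}$. Each ordinal $\alpha$ is identified with the linearly ordered set of ordinals $\beta<\alpha$; $\omega^2$ is the set of ordinals $\omega\cdot a+b$ with $a,b\in\mathbb{N}$, ordered lexicographically. $\binom{S}{n}$ is the set of $n$-element subsets of $S$. $\approx$ denotes order-equivalence. For a linearly ordered set $S$ and $n\in\mathbb{N}$, $T(n,S)$ is the least $t\in\mathbb{N}$ such that for every $c\ge 1$ and every coloring $\mathrm{COL}:\binom{S}{n}\to[c]$ there exists $S'\subseteq S$ with $S'\approx S$ and $|\mathrm{COL}(\binom{S'}{n})|\le t$ (or $\infty$ if no such $t$ exists). *)

From mathcomp Require Import all_boot.
Set Implicit Arguments.
Unset Strict Implicit.

(* The ordinal omega^2 = { omega*a + b | a, b in nat }, represented as pairs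
   (a, b) : nat * nat with the lexicographic (strict) order. *)
Definition omega2_lt : rel (nat * nat) :=
  fun x y => (x.1 < y.1) || ((x.1 == y.1) && (x.2 < y.2)).

(* For a linearly ordered set X (strict order lt), an n-element subset is
   represented by its increasing enumeration: a lt-sorted sequence of size n.
   A subset S' of X order-equivalent to X is exactly the image of an order
   embedding f : X -> X (then f is an order isomorphism X ~ S'), and the
   n-subsets of S' are exactly the [map f s] for n-subsets s of X. *)
Definition nsubset (X : Type) (lt : rel X) (n : nat) (s : seq X) : Prop :=
  sorted lt s /\ size s = n.

Definition T_bound (X : Type) (lt : rel X) (n t : nat) : Prop :=
  forall c : nat, 1 <= c ->
  forall COL : seq X -> nat,
    (forall s, nsubset lt n s -> 1 <= COL s <= c) ->
    exists f : X -> X,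
      (forall a b, lt a b -> lt (f a) (f b)) /\
      exists L : seq nat, size L <= t /\
        (forall s, nsubset lt n s -> COL (map f s) \in L).

Definition T_is (X : Type) (lt : rel X) (n t : nat) : Prop :=
  T_bound lt n t /\ forall t', T_bound lt n t' -> t <= t'.

From mathcomp Require Import all_boot zify.
From Stdlib Require Import Classical IndefiniteDescription.
Set Implicit Arguments. Unset Strict Implicit.

(* Read a point (a, b) of omega^2 with a < b as the interval [a, b]: two such
   intervals are separated, crossing or nested, or share their left endpoint.
   Upper bound: colour each 4-subset of nat by the colours of its four
   interval configurations; infinite Ramsey gives an increasing h that is
   homogeneous for this colouring, and (i, j) |-> [h (2^i), h (2^i (2j + 3))]
   embeds omega^2 so that every pair of images is one of these configurations
   of a 4-subset of the range of h: at most 4 colours.  Lower bound: colouring a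
   pair by its configuration, every order embedding of omega^2 into itself
   realises all four: the image of row 0 has two points in one row, its points
   climb arbitrarily high before the image of row 1 starts, and rows go up. *)

Lemma nsubset_map k (h : nat -> nat) s :
  {homo h : m n / m < n} -> nsubset ltn k (map h s) <-> nsubset ltn k s.
Proof.
by move=> /leq_mono/leqW_mono/mono_sorted h_mono; rewrite /nsubset h_mono size_map.
Qed.

Lemma map_in_range (A : eqType) (B C : Type) (f : A -> C) (g : B -> C) t :
  (forall a, a \in t -> exists b, f a = g b) -> exists t', map f t = map g t'.
Proof.
elim: t => [|a t IHt] fg /=; first by exists [::].
have [b ->] := fg a (mem_head a t).
have [t' ->] := IHt (fun a' a't => fg a' (mem_behead (s := a :: t) a't)).
by exists (b :: t').
Qed.

Definition infinitely_often (P : pred nat) := forall N, exists n, (N <= n) && P n.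

Lemma infinitely_often_value (T : finType) (u : nat -> T) :
  exists v, infinitely_often (fun n => u n == v).
Proof.
apply: NNPP => no_value.
have /fin_all_exists [N N_bound] : forall v, exists N, forall n, N <= n -> u n != v.
  move=> v; have [N N_max] := not_all_ex_not _ _ (not_ex_all_not _ _ no_value v).
  exists N => n N_n; apply/negP => /eqP u_n.
  by apply: N_max; exists n; rewrite N_n u_n eqxx.
by have /eqP := N_bound (u (\max_v N v)) _ (@leq_bigmax T N (u (\max_v N v))).
Qed.

Lemma infinitely_often_subsequence (P : pred nat) :
  infinitely_often P -> exists2 nu, {homo nu : m n / m < n} & forall i, P (nu i).
Proof.
move=> P_inf; pose next N := xchoose (P_inf N).
have next_spec N : (N <= next N) && P (next N) := xchooseP (P_inf N).
pose nu i := iter i (fun m => next m.+1) (next 0).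
exists nu => [|[|i]]; last by case/andP: (next_spec (nu i).+1).
- by apply: homo_ltn => [? ? ? /ltn_trans|i]; [apply | case/andP: (next_spec (nu i).+1)].
- by case/andP: (next_spec 0).
Qed.

Lemma pigeonhole_subsequence (T : finType) (u : nat -> T) :
  exists2 nu, {homo nu : m n / m < n} & exists v, forall i, u (nu i) = v.
Proof.
have [v /infinitely_often_subsequence [nu nu_homo u_nu]] := infinitely_often_value u.
by exists nu => //; exists v => i; apply/eqP.
Qed.

Definition subsequence (h g : nat -> nat) :=
  exists2 phi, {homo phi : m n / m < n} & h =1 g \o phi.

Lemma subsequence_homo h g :
  subsequence h g -> {homo g : m n / m < n} -> {homo h : m n / m < n}.
Proof. by move=> [phi phi_homo h_g] g_homo m n /phi_homo/g_homo; rewrite !h_g. Qed.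

Lemma subsequence_trans g h k :
  subsequence h g -> subsequence k h -> subsequence k g.
Proof.
move=> [phi phi_homo h_g] [psi psi_homo k_h].
by exists (phi \o psi) => [m n /psi_homo/phi_homo|n]; rewrite // k_h /= h_g.
Qed.

Lemma subsequence_tail g : subsequence (g \o succn) g.
Proof. by exists succn. Qed.

Definition monochromatic (T : Type) k (chi : seq nat -> T) h (v : T) :=
  forall s, nsubset ltn k s -> chi (map h s) = v.

(* [stage n.+1] refines the tail of [stage n] so that the colour of
   [stage n 0 :: t] is fixed; along the diagonal the colour of a k.+1-subset
   then depends only on its least element, and pigeonhole finishes. *)
Section Diagonal.

Variables (T : finType) (k : nat) (chi : seq nat -> T).
Variables (next : (nat -> nat) -> nat -> nat) (col : (nat -> nat) -> T).
Hypothesis next_tail : forall g, subsequence (next g) (g \o succn).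
Hypothesis next_col :
  forall g t, nsubset ltn k t -> chi (g 0 :: map (next g) t) = col g.

Let stage n := iter n next id.
Let diag n := stage n 0.

Lemma stage_homo n : {homo stage n : i j / i < j}.
Proof.
elim: n => [//|n IHn]; apply: (subsequence_homo (next_tail (stage n))).
by move=> i j ij; apply: IHn; rewrite ltnS.
Qed.

Lemma stage_subsequence n m : n <= m -> subsequence (stage m) (stage n).
Proof.
move/subnK <-; elim: (m - n) => [|d IHd]; first by exists id.
apply: subsequence_trans IHd _.
exact: subsequence_trans (subsequence_tail _) (next_tail _).
Qed.

Lemma diag_homo : {homo diag : i j / i < j}.
Proof.
apply: homo_ltn => [? ? ? /ltn_trans|n]; first exact.
have [phi _ next_phi] := next_tail (stage n).
by rewrite /diag /= next_phi; apply: stage_homo.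
Qed.

Lemma diag_head n t :
  sorted ltn (n :: t) -> size t = k -> chi (diag n :: map diag t) = col (stage n).
Proof.
rewrite /= path_sortedE; last exact: ltn_trans.
case/andP=> /allP t_gt_n t_sorted t_k.
have [t' t_t'] : exists t', map diag t = map (stage n.+1) t'.
  apply: map_in_range => m /t_gt_n n_m.
  have [phi _ stage_phi] := stage_subsequence n_m.
  by exists (phi 0); rewrite /diag stage_phi.
have t'_k : nsubset ltn k t'.
  rewrite -(nsubset_map _ _ (stage_homo n.+1)) -t_t' nsubset_map //.
  exact: diag_homo.
by rewrite t_t' next_col.
Qed.

Lemma diag_monochromatic :
  exists2 h, {homo h : i j / i < j} & exists v, monochromatic k.+1 chi h v.
Proof.
have [nu nu_homo [v col_nu]] := pigeonhole_subsequence (fun n => col (stage n)).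
exists (diag \o nu) => [i j /nu_homo/diag_homo //|]; exists v.
case=> [|i t] [it_sorted] // [t_k].
rewrite map_comp /= diag_head ?size_map //.
exact: (homo_sorted nu_homo _ it_sorted).
Qed.

End Diagonal.

Theorem ramsey (T : finType) k (chi : seq nat -> T) :
  exists2 h, {homo h : m n / m < n} & exists v, monochromatic k chi h v.
Proof.
elim: k chi => [|k IHk] chi.
  by exists id => //; exists (chi [::]) => -[|a s] [_ //].
have head_step g : exists hv : (nat -> nat) * T, subsequence hv.1 (g \o succn) /\
    forall t, nsubset ltn k t -> chi (g 0 :: map hv.1 t) = hv.2.
  have [h h_homo [v chi_h]] := IHk (fun t => chi (g 0 :: map (g \o succn) t)).
  exists (g \o succn \o h, v); split; first by exists h.
  by move=> t /chi_h /= <-; rewrite -map_comp.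
have [step step_spec] := functional_choice _ head_step.
by apply: (@diag_monochromatic T k chi (fun g => (step g).1) (fun g => (step g).2))
  => g; case: (step_spec g).
Qed.

Lemma nsubset_pair (X : Type) (lt : rel X) p q : nsubset lt 2 [:: p; q] <-> lt p q.
Proof. by rewrite /nsubset /= andbT; split => [[]|]. Qed.

Lemma nsubset2 (X : Type) (lt : rel X) s :
  nsubset lt 2 s -> exists p q, s = [:: p; q] /\ lt p q.
Proof. by case: s => [|p [|q [|? ?]]] [] //= /andP[pq _]; exists p, q. Qed.

Lemma omega2_ltP (p q : nat * nat) :
  omega2_lt p q <-> p.1 < q.1 \/ p.1 = q.1 /\ p.2 < q.2.
Proof.
rewrite /omega2_lt; split; first by case/orP => [|/andP[/eqP]]; [left | right].
by case=> [->|[-> ->]] //; rewrite eqxx orbT.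
Qed.

Lemma omega2_lt_fst_le p q : omega2_lt p q -> p.1 <= q.1.
Proof. by rewrite omega2_ltP; lia. Qed.

Lemma omega2_lt_rank M p q :
  omega2_lt p q -> p.2 < M -> q.2 < M -> p.1 * M + p.2 < q.1 * M + q.2.
Proof.
rewrite omega2_ltP => -[pq_fst|[-> //]] p_M q_M; last by rewrite ltn_add2l.
have : p.1.+1 * M <= q.1 * M by rewrite leq_mul2r pq_fst orbT.
by rewrite mulSn; lia.
Qed.

Lemma omega2_bounded_chain_snd (g : nat -> nat * nat) P :
  (forall j, omega2_lt (g j) (g j.+1)) -> (forall j, omega2_lt (g j) P) ->
  forall M, exists j, M <= (g j).2.
Proof.
move=> g_chain g_P M; apply: NNPP => g_snd_bounded.
have g_snd j : (g j).2 < M.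
  by rewrite ltnNge; apply/negP => M_j; apply: g_snd_bounded; exists j.
have rank_ge j : j <= (g j).1 * M + (g j).2.
  elim: j => [//|j IHj]; apply: leq_ltn_trans IHj _.
  exact: omega2_lt_rank (g_chain j) (g_snd j) (g_snd j.+1).
pose j := P.1.+1 * M.
have : (g j).1 * M <= P.1 * M by rewrite leq_mul2r omega2_lt_fst_le ?orbT.
by have := rank_ge j; have := g_snd j; rewrite /j mulSn; lia.
Qed.

(* Colours 1 to 4: fork, separated, crossing, nested. *)
Definition pair_colour (x y : nat * nat) : nat :=
  if x.1 == y.1 then 1 else if x.2 <= y.1 then 2 else if x.2 < y.2 then 3 else 4.

Definition pair_colouring (s : seq (nat * nat)) : nat :=
  if s is [:: x; y] then pair_colour x y else 1.

Section OrderEmbedding.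

Variable f : nat * nat -> nat * nat.
Hypothesis f_mono : forall p q, omega2_lt p q -> omega2_lt (f p) (f q).

Lemma row_start_le i j : (f (i, 0)).1 <= (f (i, j)).1.
Proof. by case: j => [//|j]; apply/omega2_lt_fst_le/f_mono/omega2_ltP; right. Qed.

Lemma row_unbounded i M :
  exists j, (f (i, j)).1 < (f (i.+1, 0)).1 /\ M <= (f (i, j)).2.
Proof.
have next_row j : omega2_lt (f (i, j)) (f (i.+1, 0)) by apply/f_mono/omega2_ltP; left.
have [|j M_j] := omega2_bounded_chain_snd _ next_row (M + (f (i.+1, 0)).2).+1.
  by move=> j; apply/f_mono/omega2_ltP; right.
by exists j; have /omega2_ltP := next_row j; lia.
Qed.

Lemma row_start_ge i : i <= (f (i, 0)).1.
Proof.
elim: i => [//|i IHi]; have [j [j_next _]] := row_unbounded i 0.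
by have := row_start_le i j; lia.
Qed.

Lemma row_collision : exists j, (f (0, j)).1 = (f (0, j.+1)).1.
Proof.
apply: NNPP => no_collision.
have row_step j : (f (0, j)).1 < (f (0, j.+1)).1.
  rewrite ltn_neqAle omega2_lt_fst_le ?andbT; last by apply/f_mono/omega2_ltP; right.
  by apply/eqP => collision; apply: no_collision; exists j.
have row_ge j : j <= (f (0, j)).1 by elim: j => [//|j]; have := row_step j; lia.
have /omega2_lt_fst_le : omega2_lt (f (0, (f (1, 0)).1.+1)) (f (1, 0)).
  by apply/f_mono/omega2_ltP; left.
by have := row_ge (f (1, 0)).1.+1; lia.
Qed.

Lemma pair_colour_realized k : 1 <= k <= 4 ->
  exists p q, omega2_lt p q /\ pair_colour (f p) (f q) = k.
Proof.
have row_lt i i' j j' : i < i' -> omega2_lt (i, j) (i', j').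
  by move=> ?; apply/omega2_ltP; left.
rewrite /pair_colour; case: k => [|[|[|[|[|k]]]]] //= _.
- have [j collision] := row_collision.
  by exists (0, j), (0, j.+1); rewrite collision eqxx; split=> //; apply/omega2_ltP; right.
- pose i := ((f (0, 0)).1 + (f (0, 0)).2).+1.
  exists (0, 0), (i, 0); split; first exact: row_lt.
  by have := row_start_ge i; do !case: ifP; lia.
- have [j [j_row j_snd]] := row_unbounded 0 (f (2, 0)).1.
  have [j' [j'_row j'_snd]] := row_unbounded 1 (f (0, j)).2.+1.
  exists (0, j), (1, j'); split; first exact: row_lt.
  have := row_start_le 1 j'.
  by do !case: ifP; lia.
- have [j [j_row j_snd]] := row_unbounded 0 ((f (1, 0)).1 + (f (1, 0)).2).+1.
  exists (0, j), (1, 0); split; first exact: row_lt.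
  by do !case: ifP; lia.
Qed.

End OrderEmbedding.

Lemma T_bound_ge4 t : T_bound omega2_lt 2 t -> 4 <= t.
Proof.
move=> t_bound.
have colouring_range s : nsubset omega2_lt 2 s -> 1 <= pair_colouring s <= 4.
  by move=> _; case: s => [|x [|y [|? ?]]] //=; rewrite /pair_colour; do !case: ifP.
have [f [f_mono [L [L_t L_colours]]]] := t_bound 4 isT _ colouring_range.
suff sub_L : {subset [:: 1; 2; 3; 4] <= L} by apply: leq_trans (uniq_leq_size _ sub_L) L_t.
move=> k k_in; have [|p [q [pq <-]]] := pair_colour_realized f_mono (k := k).
  by move: k_in; rewrite !inE => /or4P[] /eqP->.
exact: (L_colours [:: p; q] (proj2 (nsubset_pair _ _ _) pq)).
Qed.

Definition pair_map (h : nat -> nat) (p : nat * nat) := (h p.1, h p.2).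

Definition pair_shapes (w : seq nat) : seq (seq (nat * nat)) :=
  if w is [:: a; b; c; d] then
    [:: [:: (a, c); (b, d)]; [:: (a, d); (b, c)]; [:: (a, b); (c, d)]; [:: (a, b); (a, c)]]
  else [::].

Lemma pair_shapes_map h w :
  pair_shapes (map h w) = map (map (pair_map h)) (pair_shapes w).
Proof. by case: w => [|a [|b [|c [|d [|]]]]]. Qed.

Lemma size_pair_shapes w : size w = 4 -> size (pair_shapes w) = 4.
Proof. by case: w => [|a [|b [|c [|d [|]]]]]. Qed.

Lemma pair_shapes_nsubset w x :
  nsubset ltn 4 w -> x \in pair_shapes w -> nsubset omega2_lt 2 x.
Proof.
case: w => [|a [|b [|c [|d [|]]]]] [] //= /and4P[ab bc cd _] _.
by rewrite !inE => /or4P[] /eqP-> ; apply/nsubset_pair/omega2_ltP => /=; lia.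
Qed.

Lemma interval_pair_shape x0 x1 y0 y1 :
  x0 < x1 -> y0 < y1 -> x0 < y0 -> x1 != y0 -> x1 != y1 ->
  exists2 w, nsubset ltn 4 w & [:: (x0, x1); (y0, y1)] \in pair_shapes w.
Proof.
move=> x01 y01 x0y0 x1y0 x1y1.
case: (ltngtP x1 y0) x1y0 => [x1_y0|y0_x1|->] // _.
  exists [:: x0; x1; y0; y1]; last by rewrite !inE eqxx /= ?orbT.
  by rewrite /nsubset /= x01 x1_y0 y01.
case: (ltngtP x1 y1) x1y1 => [x1_y1|y1_x1|->] // _.
  exists [:: x0; y0; x1; y1]; last by rewrite !inE eqxx /= ?orbT.
  by rewrite /nsubset /= x0y0 y0_x1 x1_y1.
exists [:: x0; y0; y1; x1]; last by rewrite !inE eqxx /= ?orbT.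
by rewrite /nsubset /= x0y0 y01 y1_x1.
Qed.

Lemma fork_pair_shape x0 x1 y1 : x0 < x1 -> x1 < y1 ->
  exists2 w, nsubset ltn 4 w & [:: (x0, x1); (x0, y1)] \in pair_shapes w.
Proof.
move=> x01 x1y1; exists [:: x0; x1; y1; y1.+1]; last by rewrite !inE eqxx /= ?orbT.
by rewrite /nsubset /= x01 x1y1 ltnSn.
Qed.

(* Rows have distinct 2-adic valuations, so no endpoint is shared across rows. *)
Definition code i j := 2 ^ i * j.*2.+1.

Lemma code_lt_snd i j j' : j < j' -> code i j < code i j'.
Proof. by move=> jj'; rewrite /code ltn_pmul2l ?expn_gt0 // ltnS ltn_double. Qed.

Lemma code_lt_fst i i' : i < i' -> code i 0 < code i' 0.
Proof. by move=> ii'; rewrite /code !muln1 ltn_exp2l. Qed.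

Lemma code_neq i i' j j' : i < i' -> code i j != code i' j'.
Proof.
move=> ii'; rewrite /code -(subnKC ii') expnD expnS -!mulnA mulnCA.
rewrite eqn_pmul2l ?expn_gt0 //.
by apply/eqP => /(congr1 odd); rewrite /= odd_double oddM.
Qed.

Definition spread (p : nat * nat) := (code p.1 0, code p.1 p.2.+1).

Lemma spread_pair_shape p q : omega2_lt p q ->
  exists2 w, nsubset ltn 4 w & [:: spread p; spread q] \in pair_shapes w.
Proof.
case: p q => [i j] [i' j'] /omega2_ltP /= [ii'|[<- jj']].
  apply: interval_pair_shape; rewrite ?code_lt_snd ?code_lt_fst ?code_neq //.
by apply: fork_pair_shape; apply: code_lt_snd.
Qed.

Lemma T_bound_le4 : T_bound omega2_lt 2 4.
Proof.
move=> c _ COL COL_range.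
pose chi w := [ffun i : 'I_4 => inord (COL (nth [::] (pair_shapes w) i)) : 'I_c.+1].
have [h h_homo [v chi_h]] := ramsey 4 chi.
pose L := [seq val (v i) | i <- enum 'I_4].
have shape_colour w x :
    nsubset ltn 4 w -> x \in pair_shapes (map h w) -> COL x \in L.
  move=> w4 x_w; have hw4 : nsubset ltn 4 (map h w) by rewrite nsubset_map.
  have [i] := nthP [::] x_w; rewrite size_pair_shapes ?hw4.2 // => i4 x_i.
  have /andP[_ COL_c] := COL_range _ (pair_shapes_nsubset hw4 x_w).
  have := congr1 (fun g : {ffun 'I_4 -> 'I_c.+1} => val (g (Ordinal i4))) (chi_h w w4).
  rewrite ffunE /= x_i inordK // => ->.
  by apply: (map_f (fun i : 'I_4 => val (v i))); rewrite mem_enum.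
pose f p := pair_map h (spread p).
have f_shape p q : omega2_lt p q ->
    exists2 w, nsubset ltn 4 w & [:: f p; f q] \in pair_shapes (map h w).
  case/spread_pair_shape => w w4 pq_w; exists w => //.
  by rewrite pair_shapes_map (map_f (map (pair_map h)) pq_w).
exists f; split.
  move=> p q /f_shape [w w4 pq_w]; apply/(nsubset_pair omega2_lt).
  by apply: pair_shapes_nsubset pq_w; rewrite nsubset_map.
exists L; split; first by rewrite size_map size_enum_ord.
by move=> s /nsubset2 [p [q [-> /f_shape [w w4 pq_w]]]]; apply: shape_colour pq_w.
Qed.

Theorem theorem6p2 : T_is omega2_lt 2 4.
Proof. by split; [exact: T_bound_le4 | exact: T_bound_ge4]. Qed.
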